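(* Let $A=[a_{ij}]\in M_{m,n}(\mathbb{R})$ have rank $r\geq 1$ and be properly arranged. Then $A$ is diagonally eliminable up to $r$. Moreover, $|a^{(2k)}_{k+1,k+1}|\geq |a^{(2k)}_{ij}|$ for all $k$ with $0\leq k<r$ and all $i,j$ with $k+1\leq i\leq m$, $k+1\leq j\leq n$.
   Context: Gauss-Jordan procedure: for $A\in M_{m,n}(\mathbb{R})$ set $A^{(0)}=A$. For $k\geq 0$, if $A^{(2k)}=[a^{(2k)}_{ij}]$ is defined and $a^{(2k)}_{k+1,k+1}\neq 0$, let $\mathcal{G}_{2k+1}$ be the $m\times m$ diagonal matrix with all diagonal entries $1$ except the $(k+1,k+1)$ entry, which is $1/a^{(2k)}_{k+1,k+1}$, and set $A^{(2k+1)}=\mathcal{G}_{2k+1}A^{(2k)}=[a^{(2k+1)}_{ij}]$; then let $\mathcal{G}_{2k+2}=[g_{ij}]_{m\times m}$ with $g_{ii}=1$, $g_{i,k+1}=-a^{(2k+1)}_{i,k+1}$ for $i\neq k+1$, and all other entries $0$, and set $A^{(2k+2)}=\mathcal{G}_{2k+2}A^{(2k+1)}$. A matrix $A$ of rank $r\geq 1$ is diagonally eliminable up to $r$ if for each $k=1,\dots,r$ the matrix $A^{(2k-2)}$ is defined and $a^{(2k-2)}_{kk}\neq 0$. Minors: $m^{i_1\dots i_p}_{j_1\dots j_p}$ (increasing indices) is the determinant of the submatrix of $A$ with rows $i_1,\dots,i_p$ and columns $j_1,\dots,j_p$; $m_k=m^{1\dots k}_{1\dots k}$. $A$ (of rank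 $r\geq 1$) is properly arranged if $|a_{ij}|\leq|a_{11}|$ for all $1\leq i\leq m$, $1\leq j\leq n$, and for every integer $k$ with $1\leq k<\min\{m,n\}$ one has $|m^{1\dots k\,i}_{1\dots k\,j}|\leq|m_{k+1}|$ for all $k+1\leq i\leq m$, $k+1\leq j\leq n$. *)

(* Indices are 0-based: paper's row/column k+1 is our k. *)
From HB Require Import structures.
From mathcomp Require Import all_boot all_order all_algebra.
Set Implicit Arguments. Unset Strict Implicit. Unset Printing Implicit Defensive.
Import Order.TTheory GRing.Theory Num.Theory.
Local Open Scope ring_scope.

Section GJ.
Variables (R : fieldType) (m n : nat).

Definition gj_G1 (k : nat) (b : R) : 'M[R]_m :=
  \matrix_(i, j) (if i == j then (if val i == k then b^-1 else 1) else 0).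

Definition gj_G2 (k : nat) (B : 'M[R]_(m, n)) : 'M[R]_m :=
  \matrix_(i, j) (if i == j then 1
                  else if val j == k then
                         (if insub k : option 'I_n is Some c then - B i c else 0)
                       else 0).

Definition gj_step1 (k : nat) (B : 'M[R]_(m, n)) : option 'M[R]_(m, n) :=
  match insub k : option 'I_m, insub k : option 'I_n with
  | Some p, Some q => if B p q != 0 then Some (gj_G1 k (B p q) *m B) else None
  | _, _ => None
  end.

Definition gj_step2 (k : nat) (B : 'M[R]_(m, n)) : option 'M[R]_(m, n) :=
  if (k < m)%N && (k < n)%N then Some (gj_G2 k B *m B) else None.

(* gj A p = Some A^{(p)} if A^{(p)} is defined, None otherwise *)
Fixpoint gj (A : 'M[R]_(m, n)) (p : nat) : option 'M[R]_(m, n) :=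
  match p with
  | 0 => Some A
  | p'.+1 => if odd p' then obind (gj_step2 p'./2) (gj A p')
             else obind (gj_step1 p'./2) (gj A p')
  end.

Definition diag_eliminable (A : 'M[R]_(m, n)) (r : nat) : Prop :=
  forall k : nat, (k < r)%N ->
    exists B, gj A (2 * k) = Some B /\
      exists (p : 'I_m) (q : 'I_n), val p = k /\ val q = k /\ B p q != 0.

(* row selector for rows 0..k-1, i (and similarly columns) *)
Definition bsel (N k : nat) (i : 'I_N) (a : 'I_k.+1) : 'I_N :=
  insubd i (if (val a < k)%N then val a else val i).

(* minor m^{1..k i}_{1..k j} (0-based: rows 0..k-1,i ; cols 0..k-1,j) *)
Definition bminor (A : 'M[R]_(m, n)) (k : nat) (i : 'I_m) (j : 'I_n) : R :=
  \det (\matrix_(a < k.+1, b < k.+1) A (bsel i a) (bsel j b)).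
End GJ.

Definition properly_arranged (R : realFieldType) (m n : nat) (A : 'M[R]_(m, n)) : Prop :=
  (forall (p : 'I_m) (q : 'I_n), val p = 0%N -> val q = 0%N ->
     forall (i : 'I_m) (j : 'I_n), `|A i j| <= `|A p q|) /\
  (forall k : nat, (1 <= k)%N -> (k < minn m n)%N ->
     forall (i : 'I_m) (j : 'I_n), (k <= i)%N -> (k <= j)%N ->
     forall (p : 'I_m) (q : 'I_n), val p = k -> val q = k ->
       `|bminor A k i j| <= `|bminor A k p q|).

From HB Require Import structures.
From mathcomp Require Import all_boot all_order all_algebra.
From mathcomp Require Import zify.
Set Implicit Arguments. Unset Strict Implicit. Unset Printing Implicit Defensive.
Import Order.TTheory GRing.Theory Num.Theory.
Local Open Scope ring_scope.

(* After k rounds, A^(2k) = M A with M invertible, where the columns of M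
   beyond the k-th and the first k columns of A^(2k) are columns of the
   identity.  For i, j > k the block of A^(2k) on rows 1..k,i and columns
   1..k,j is then the block of M on rows and columns 1..k,i, whose determinant
   is the leading k-minor d of M whatever i is, times the corresponding block
   of A; and that block of A^(2k) is triangular with determinant a^(2k)_ij.
   So a^(2k)_ij = d m^{1..k i}_{1..k j}: proper arrangement bounds every
   trailing entry by the pivot, and a zero pivot would make the whole trailing
   block vanish, giving rank A = rank A^(2k) <= k. *)

Lemma val_bsel N k (i : 'I_N) (a : 'I_k.+1) : (k <= i)%N ->
  bsel i a = (if (a < k)%N then val a else val i) :> nat.
Proof.
move=> ki; rewrite /bsel val_insubd; case: (ltnP a k) => ak.
  by have -> : (a < N)%N by have := ltn_ord i; lia.
by rewrite ltn_ord.
Qed.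

Lemma bsel_ord_max N k (i : 'I_N) : bsel i (@ord_max k) = i.
Proof. by apply: val_inj; rewrite /bsel val_insubd /= ltnn ltn_ord. Qed.

Lemma bsel0 N (i : 'I_N) (a : 'I_1) : bsel i a = i.
Proof. by apply: val_inj => /=; rewrite val_bsel. Qed.

Lemma bsel_lt N k (i i' : 'I_N) (a : 'I_k.+1) :
  (a < k)%N -> (k <= i)%N -> (k <= i')%N -> bsel i a = bsel i' a.
Proof. by move=> ak ki ki'; apply: val_inj => /=; rewrite !val_bsel // ak. Qed.

Lemma bsel_inj N k (i : 'I_N) : (k <= i)%N -> injective (@bsel N k i).
Proof.
move=> ki a b /(congr1 val) /=; rewrite !val_bsel //.
have := ltn_ord a; have := ltn_ord b.
by case: (ltnP a k); case: (ltnP b k) => ? ? ? ? eab; apply: val_inj;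
  move: eab; rewrite /=; lia.
Qed.

Definition bsubmx (T : Type) (m n k : nat) (i : 'I_m) (j : 'I_n)
    (A : 'M[T]_(m, n)) : 'M[T]_k.+1 :=
  \matrix_(a, b) A (bsel i a) (bsel j b).

Section UnitColumns.
Variables (R : pzRingType) (m n : nat).

Definition unit_cols_ge k (M : 'M[R]_m) :=
  forall s t : 'I_m, (k <= t)%N -> M s t = (s == t)%:R.

Definition unit_cols_lt k (B : 'M[R]_(m, n)) :=
  forall (s : 'I_m) (c : 'I_n), (c < k)%N -> B s c = (s == c :> nat)%:R.

Lemma bsubmx_mul k (M : 'M[R]_m) (A : 'M[R]_(m, n)) (i : 'I_m) (j : 'I_n) :
  (k <= i)%N -> unit_cols_ge k M ->
  bsubmx k i j (M *m A) = bsubmx k i i M *m bsubmx k i j A.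
Proof.
move=> ki idM; apply/matrixP => a b; rewrite !mxE.
rewrite (bigID (mem (bsel i @: [set: 'I_k.+1]))) /= [X in _ + X]big1 ?addr0.
  rewrite big_imset /=; last by move=> x y _ _; apply: bsel_inj.
  by apply: eq_big => [x|x _]; rewrite ?inE ?mxE.
move=> t tS; have kt : (k <= t)%N.
  rewrite leqNgt; apply: contra tS => tk; apply/imsetP.
  by exists (Ordinal (leqW tk)); rewrite ?inE //; apply: val_inj => /=; rewrite val_bsel ?tk.
rewrite idM //; case: eqP => [eat|_]; last by rewrite mul0r.
by move: tS; rewrite -eat imset_f ?inE.
Qed.

End UnitColumns.

Section BorderedMinors.
Variables (R : comPzRingType) (m n : nat).

Lemma det_bsubmx_unit_cols_ge k (M : 'M[R]_m) (i i' : 'I_m) :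
  (k <= i)%N -> (k <= i')%N -> unit_cols_ge k M ->
  \det (bsubmx k i i M) = \det (bsubmx k i' i' M).
Proof.
move=> ki ki' idM.
(* The last column of such a block is the last unit vector. *)
have lead (l : 'I_m) : (k <= l)%N ->
    \det (bsubmx k l l M) = \det (row' ord_max (col' ord_max (bsubmx k l l M))).
  move=> kl; rewrite (expand_det_col _ ord_max) (bigD1 ord_max) //= big1.
    rewrite addr0 /cofactor !mxE bsel_ord_max idM // eqxx mul1r.
    by rewrite exprD -exprMn mulrNN mulr1 expr1n mul1r.
  move=> a na; rewrite !mxE bsel_ord_max idM //.
  by rewrite -[l in _ == l](bsel_ord_max k) (inj_eq (bsel_inj kl)) (negbTE na) mul0r.
rewrite (lead i ki) (lead i' ki'); congr (\det _); apply/matrixP => a b; rewrite !mxE.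
have liftk (c : 'I_k) : (lift ord_max c < k)%N by rewrite lift_max /= ltn_ord.
by rewrite (bsel_lt (liftk a) ki ki') (bsel_lt (liftk b) ki ki').
Qed.

Lemma det_bsubmx_unit_cols_lt k (B : 'M[R]_(m, n)) (i : 'I_m) (j : 'I_n) :
  (k <= i)%N -> (k <= j)%N -> unit_cols_lt k B -> \det (bsubmx k i j B) = B i j.
Proof.
move=> ki kj idB; rewrite -det_tr det_trig.
  rewrite big_ord_recr /= big1 ?mul1r; first by rewrite !mxE !bsel_ord_max.
  move=> a _; rewrite !mxE idB; last by rewrite val_bsel //= ltn_ord.
  by rewrite !val_bsel //= ltn_ord eqxx.
apply/is_trig_mxP => a b ab; have ak : (a < k)%N by have := ltn_ord b; lia.
rewrite !mxE idB; last by rewrite val_bsel // ak.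
rewrite !val_bsel // ak.
by case: ifP => bk; rewrite (_ : _ == _ = false) //; apply/eqP; rewrite /=; lia.
Qed.

Lemma unit_cols_mulmx_minor k (M : 'M[R]_m) (A : 'M[R]_(m, n)) :
  unit_cols_ge k M -> unit_cols_lt k (M *m A) ->
  exists d, forall (i : 'I_m) (j : 'I_n), (k <= i)%N -> (k <= j)%N ->
    (M *m A) i j = d * \det (bsubmx k i j A).
Proof.
move=> idM idMA; case: (ltnP k m) => [km | mk]; last first.
  by exists 0 => i j ki; have := ltn_ord i; lia.
exists (\det (bsubmx k (Ordinal km) (Ordinal km) M)) => i j ki kj.
rewrite -(det_bsubmx_unit_cols_lt ki kj idMA) (bsubmx_mul A j ki idM) det_mulmx.
by rewrite (det_bsubmx_unit_cols_ge (i' := Ordinal km) ki (leqnn k) idM).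
Qed.

End BorderedMinors.

Section GaussJordanRound.
Variables (R : fieldType) (m n : nat).
Implicit Types (A B : 'M[R]_(m, n)) (M : 'M[R]_m).

Lemma gj_G1_mulmx r k (b : R) (C : 'M[R]_(m, r)) s c :
  (gj_G1 m k b *m C) s c = (if (s : nat) == k then b^-1 else 1) * C s c.
Proof.
rewrite mxE (bigD1 s) //= big1 ?addr0 => [|l ls]; rewrite mxE ?eqxx //.
by rewrite eq_sym (negbTE ls) mul0r.
Qed.

Lemma gj_G2_mulmx k B (p : 'I_m) (q : 'I_n) :
  p = k :> nat -> q = k :> nat -> forall r (C : 'M[R]_(m, r)) s c,
  (gj_G2 k B *m C) s c = C s c - (if s == p then 0 else B s q) * C p c.
Proof.
move=> vp vq r C s c.
have G2E s' l : gj_G2 k B s' l = if s' == l then 1 else if l == p then - B s' q else 0.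
  rewrite mxE; have -> : insub k = Some q by rewrite -vq valK.
  by case: (s' == l); rewrite // -vp.
rewrite mxE; case: (eqVneq s p) => [->|sp].
  rewrite (bigD1 p) //= big1 => [|l lp]; rewrite G2E.
    by rewrite eqxx mul1r addr0 mul0r subr0.
  by rewrite eq_sym (negbTE lp) mul0r.
rewrite (bigD1 s) //= (bigD1 p) /=; last by rewrite eq_sym sp.
rewrite big1 => [|l /andP [ls lp]]; rewrite !G2E.
  by rewrite eqxx (negbTE sp) eqxx mul1r addr0 mulNr.
by rewrite eq_sym (negbTE ls) (negbTE lp) mul0r.
Qed.

Lemma gj_G1_unitmx k (b : R) : b != 0 -> gj_G1 m k b \in unitmx.
Proof.
move=> b0; apply: (proj1 (@mulmx1_unit _ _ _ (gj_G1 m k b^-1) _)).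
apply/matrixP => s c; rewrite gj_G1_mulmx !mxE /=.
case: (s =P c) => _; last by rewrite mulr0.
by case: ifP => _; rewrite ?mulr1 // invrK mulVf.
Qed.

Lemma gj_G2_unitmx k B (p : 'I_m) (q : 'I_n) :
  p = k :> nat -> q = k :> nat -> gj_G2 k B \in unitmx.
Proof.
move=> vp vq.
(* gj_G2 k B = 1 - v e_p^T with v_p = 0, so 1 + v e_p^T inverts it. *)
pose G' := \matrix_(s, c) ((s == c)%:R + (if s == p then 0 else B s q) * (c == p)%:R).
apply: (proj1 (@mulmx1_unit _ _ _ G' _)); apply/matrixP => s c.
by rewrite (gj_G2_mulmx B vp vq) !mxE eqxx mul0r addr0 [p == c]eq_sym addrK.
Qed.

Lemma gj_succ A k :
  gj A (2 * k.+1) = obind (gj_step2 k) (obind (gj_step1 k) (gj A (2 * k))).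
Proof.
have -> : (2 * k.+1 = (2 * k).+2)%N by lia.
by rewrite /= oddM /= mul2n half_double uphalf_double.
Qed.

Lemma gj_round A k B (p : 'I_m) (q : 'I_n) :
  p = k :> nat -> q = k :> nat -> gj A (2 * k) = Some B -> B p q != 0 ->
  gj A (2 * k.+1) =
    Some (gj_G2 k (gj_G1 m k (B p q) *m B) *m (gj_G1 m k (B p q) *m B)).
Proof.
move=> vp vq hB nz; rewrite gj_succ hB /= /gj_step1.
have -> : insub k = Some p by rewrite -vp valK.
have -> : insub k = Some q by rewrite -vq valK.
by rewrite nz /= /gj_step2 -{1}vp -vq !ltn_ord.
Qed.

Lemma gj_round_unit_cols_ge k B (b : R) M (p : 'I_m) (q : 'I_n) :
  p = k :> nat -> q = k :> nat -> unit_cols_ge k M ->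
  unit_cols_ge k.+1 (gj_G2 k B *m (gj_G1 m k b *m M)).
Proof.
move=> vp vq idM s t kt.
rewrite (gj_G2_mulmx B vp vq) !gj_G1_mulmx !idM ?(ltnW kt) //.
have -> : (p == t) = false by apply/eqP => ept; move: kt; rewrite -ept vp; lia.
rewrite !mulr0 subr0; case: (eqVneq s t) => [->|]; last by rewrite mulr0.
by rewrite (_ : (t : nat) == k = false) ?mul1r //; apply/eqP; lia.
Qed.

Lemma gj_round_unit_cols_lt k B (p : 'I_m) (q : 'I_n) :
  p = k :> nat -> q = k :> nat -> unit_cols_lt k B -> B p q != 0 ->
  unit_cols_lt k.+1 (gj_G2 k (gj_G1 m k (B p q) *m B) *m (gj_G1 m k (B p q) *m B)).
Proof.
move=> vp vq idB nz s c ck; rewrite (gj_G2_mulmx _ vp vq) !gj_G1_mulmx.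
case: (ltnP c k) => ck'.
  rewrite (idB s c ck') (idB p c ck') (_ : (p : nat) == c = false); last by apply/eqP; lia.
  rewrite !mulr0 subr0; case: (eqVneq (s : nat) c) => [esc|]; last by rewrite mulr0.
  by rewrite (_ : (s : nat) == k = false) ?mul1r //; apply/eqP; lia.
have -> : c = q by apply: val_inj => /=; lia.
rewrite vp eqxx mulVf //; case: (eqVneq s p) => [->|sp].
  by rewrite vp eqxx mulVf // mul0r subr0 vq eqxx.
have sk : ((s : nat) == k) = false.
  by apply/eqP => sk; move/eqP: sp; apply; apply: val_inj => /=; lia.
by rewrite sk mul1r mulr1 subrr vq sk.
Qed.

Definition gj_invariant A k B := exists2 M, M \in unitmx &
  [/\ B = M *m A, unit_cols_ge k M & unit_cols_lt k B].

Lemma gj_invariant0 A : gj_invariant A 0 A.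
Proof. by exists 1%:M; [exact: unitmx1 | split; rewrite ?mul1mx // => s t; rewrite mxE]. Qed.

Lemma gj_invariant_round A k B (p : 'I_m) (q : 'I_n) :
  p = k :> nat -> q = k :> nat -> gj_invariant A k B -> B p q != 0 ->
  gj_invariant A k.+1
    (gj_G2 k (gj_G1 m k (B p q) *m B) *m (gj_G1 m k (B p q) *m B)).
Proof.
move=> vp vq [M uM [eB idM idB]] nz.
exists (gj_G2 k (gj_G1 m k (B p q) *m B) *m (gj_G1 m k (B p q) *m M)).
  by rewrite !unitmx_mul uM gj_G1_unitmx // (gj_G2_unitmx _ vp vq).
split; first by rewrite eB !mulmxA.
  exact: gj_round_unit_cols_ge vp vq idM.
exact: gj_round_unit_cols_lt.
Qed.

Lemma gj_invariant_minor A k B : gj_invariant A k B ->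
  exists d, forall (i : 'I_m) (j : 'I_n), (k <= i)%N -> (k <= j)%N ->
    B i j = d * \det (bsubmx k i j A).
Proof. by case=> M _ [-> idM idB]; apply: unit_cols_mulmx_minor. Qed.

End GaussJordanRound.

Lemma mxrank_leq_minn (F : fieldType) m n (A : 'M[F]_(m, n)) :
  (\rank A <= minn m n)%N.
Proof. by rewrite leq_min rank_leq_row rank_leq_col. Qed.

Lemma mxrank_zero_rows_ge (F : fieldType) m n k (B : 'M[F]_(m, n)) :
  (forall (i : 'I_m) (c : 'I_n), (k <= i)%N -> B i c = 0) -> (\rank B <= k)%N.
Proof.
move=> B0; have -> : B = (pid_mx k : 'M_(m, k)) *m ((pid_mx k : 'M_(k, m)) *m B).
  rewrite mulmxA mul_pid_mx !minnn; apply/matrixP => s c.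
  rewrite mxE (bigD1 s) //= big1 => [|l ls]; rewrite !mxE.
    rewrite eqxx addr0 mulr_natl; case: ltnP => sk; first by rewrite mulr1n.
    by rewrite mulr0n B0.
  by rewrite (_ : (s : nat) == l = false) ?mul0r //; apply: contraNF ls => /eqP/val_inj->.
exact: mulmx_max_rank.
Qed.

Section ProperlyArranged.
Variables (R : realFieldType) (m n : nat) (A : 'M[R]_(m, n)).
Hypothesis arrA : properly_arranged A.

Lemma properly_arranged_minor k (i p : 'I_m) (j q : 'I_n) :
  (k < minn m n)%N -> (k <= i)%N -> (k <= j)%N -> p = k :> nat -> q = k :> nat ->
  `|\det (bsubmx k i j A)| <= `|\det (bsubmx k p q A)|.
Proof.
case: arrA => arr0 arrS; case: k => [|k] kmn ki kj vp vq; last exact: arrS.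
by rewrite !det_mx11 !mxE !bsel0; apply: arr0.
Qed.

Lemma gj_invariant_pivot_neq0 k B (p : 'I_m) (q : 'I_n) :
  p = k :> nat -> q = k :> nat -> (k < \rank A)%N -> gj_invariant A k B ->
  B p q != 0.
Proof.
move=> vp vq kr invB; have [d Bd] := gj_invariant_minor invB.
case: invB => M uM [eB _ idB].
have kmn : (k < minn m n)%N by have := mxrank_leq_minn A; lia.
apply/eqP => Bpq0.
have B0 (i : 'I_m) (c : 'I_n) : (k <= i)%N -> B i c = 0.
  move=> ki; case: (ltnP c k) => ck.
    by rewrite idB // (_ : (i : nat) == c = false) //; apply/eqP; lia.
  move: Bpq0; rewrite !Bd ?vp ?vq // => /eqP; rewrite mulf_eq0.
  case/orP => [/eqP-> | /eqP minor0]; first by rewrite mul0r.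
  have := properly_arranged_minor kmn ki ck vp vq.
  by rewrite minor0 normr0 normr_le0 => /eqP->; rewrite mulr0.
have rkB : \rank A = \rank B by rewrite eB (eqmxMfull _ (_ : row_full M)) ?row_full_unit.
by have := mxrank_zero_rows_ge B0; lia.
Qed.

Lemma gj_invariant_pivot_max k B (p i : 'I_m) (q j : 'I_n) :
  p = k :> nat -> q = k :> nat -> (k < minn m n)%N -> gj_invariant A k B ->
  (k <= i)%N -> (k <= j)%N -> `|B i j| <= `|B p q|.
Proof.
move=> vp vq kmn invB ki kj; have [d Bd] := gj_invariant_minor invB.
rewrite !Bd ?vp ?vq // !normrM ler_wpM2l //.
exact: properly_arranged_minor.
Qed.

Lemma gj_reaches_invariant k : (k <= \rank A)%N ->
  exists2 B, gj A (2 * k) = Some B & gj_invariant A k B.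
Proof.
elim: k => [|k IHk] kr; first by exists A; rewrite ?muln0 //; apply: gj_invariant0.
have [B gjB invB] := IHk (ltnW kr).
have kmn : (k < minn m n)%N by have := mxrank_leq_minn A; lia.
have km : (k < m)%N by lia.
have kn : (k < n)%N by lia.
have pivB := gj_invariant_pivot_neq0 (p := Ordinal km) (q := Ordinal kn) erefl erefl kr invB.
by eexists; [exact: gj_round gjB pivB | exact: gj_invariant_round].
Qed.

End ProperlyArranged.

Theorem theorem2p11 (R : realFieldType) (m n r : nat) (A : 'M[R]_(m, n)) :
  \rank A = r -> (1 <= r)%N -> properly_arranged A ->
  diag_eliminable A r /\
  (forall k : nat, (k < r)%N -> forall B, gj A (2 * k) = Some B ->
     forall (p : 'I_m) (q : 'I_n), val p = k -> val q = k ->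
     forall (i : 'I_m) (j : 'I_n), (k <= i)%N -> (k <= j)%N ->
       `|B i j| <= `|B p q|).
Proof.
move=> <- _ arrA; have rk_minn := mxrank_leq_minn A.
split=> [k kr | k kr B gjB p q vp vq i j ki kj].
  have [B gjB invB] := gj_reaches_invariant arrA (ltnW kr).
  have km : (k < m)%N by lia.
  have kn : (k < n)%N by lia.
  exists B; split=> //; exists (Ordinal km), (Ordinal kn); do 2!split=> //.
  exact: (gj_invariant_pivot_neq0 (p := Ordinal km) (q := Ordinal kn)
           arrA erefl erefl kr invB).
have [B' gjB' invB'] := gj_reaches_invariant arrA (ltnW kr).
have eB : B' = B by move: gjB'; rewrite gjB => -[].
have kmn : (k < minn m n)%N by lia.
rewrite -eB; exact: (gj_invariant_pivot_max arrA vp vq kmn invB' ki kj).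
Qed.
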